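(* Let $G$ be a finite connected graph. Let $\mathcal P_e$ (resp. $\mathcal P_o$) be the set of equivalence classes of prime reduced cycles of $G$ of even (resp. odd) length, and $\mathcal P_a$ the set of equivalence classes of prime reduced alternating cycles of $D_G$. Then: (1) If $C=(e_1,e_2,\dots,e_{2r-1},e_{2r})$ is a prime reduced cycle of $G$ of length $2r$, then $\tilde C=[e_1,e_2^{-1},e_3,\dots,e_{2r-1},e_{2r}^{-1}]$ and $\bar C=[e_1^{-1},e_2,e_3^{-1},\dots,e_{2r-1}^{-1},e_{2r}]$ are prime reduced alternating cycles of $D_G$ of length $2r$. (2) If $C=(e_1,\dots,e_{2r+1})$ is a prime reduced cycle of $G$ of length $2r+1$, then $\tilde C=[e_1,e_2^{-1},\dots,e_{2r+1},e_1^{-1},e_2,\dots,e_{2r+1}^{-1}]$ (the arcs $e_1,\dots,e_{2r+1},e_1,\dots,e_{2r+1}$ with every second arc, starting from the second, replaced by its inverse) is a prime reduced alternating cycle of $D_G$ of length $2(2r+1)$. (3) These assignments induce a bijection from $(\mathcal P_e\times\{1,2\})\cup\mathcal P_o$ onto $\mathcal P_a$, under which each class in $\mathcal P_e$ of length $2r$ corresponds to exactly two classes in $\mathcal P_a$ of length $2r$ and each class in $\mathcal P_o$ of length $2r+1$ corresponds to exactly one class in $\mathcal P_a$ of length $2(2r+1)$.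
   Context: Graphs are finite and simple. For a connected graph $G$, $D_G$ is its symmetric digraph with arc set $D(G)=\{(u,v),(v,u): uv\in E(G)\}$; for $e=(u,v)$, $o(e)=u$, $t(e)=v$, $e^{-1}=(v,u)$. A cycle of length $k$ in $G$ is a sequence $(e_1,\dots,e_k)$ of arcs with $t(e_i)=o(e_{i+1})$ ($1\le i\le k-1$) and $t(e_k)=o(e_1)$; it has backtracking if $e_{i+1}=e_i^{-1}$ for some $i\le k-1$; it is reduced if neither it nor its double $(e_1,\dots,e_k,e_1,\dots,e_k)$ has backtracking; it is prime if it is not $B^r$ for a cycle $B$ and $r\ge 2$; two cycles are equivalent if one is a cyclic shift of the other. An alternating walk of length $r$ in $D_G$ is a sequence $[e_1,\dots,e_r]$ of arcs with vertices $v_0,\dots,v_r$ such that either $e_i=(v_{i-1},v_i)$ for odd $i$ and $e_i=(v_i,v_{i-1})$ for even $i$, or $e_i=(v_i,v_{i-1})$ for odd $i$ and $e_i=(v_{i-1},v_i)$ for even $i$. It has backtracking if $e_{i+1}=e_i$ for some $i\le r-1$. An alternating cycle is an alternating walk of even length with $v_0=v_r$; it has a tail if $e_r=e_1$; it is reduced if it has neither backtracking nor a tail. Equivalence (cyclic shift of arc sequence), multiples and primality are as for cycles. *)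

From mathcomp Require Import all_boot.
Set Implicit Arguments. Unset Strict Implicit. Unset Printing Implicit Defensive.

Section Graphs.
Variable T : finType.
(* A finite simple graph is a symmetric irreflexive relation e : rel T.
   Arcs of D_G are pairs (u,v) with e u v; o(a) = a.1, t(a) = a.2. *)
Variable e : rel T.

Definition is_arc (a : T * T) : bool := e a.1 a.2.
Definition ainv (a : T * T) : T * T := (a.2, a.1).

Definition is_cycle (c : seq (T * T)) : bool :=
  if c is a :: s then
    all is_arc c && path (fun x y => x.2 == y.1) a s && ((last a s).2 == a.1)
  else false.

Definition has_backtracking (c : seq (T * T)) : bool :=
  has (fun p => p.2 == ainv p.1) (zip c (behead c)).

Definition reduced (c : seq (T * T)) : bool :=
  ~~ has_backtracking c && ~~ has_backtracking (c ++ c).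

Definition cpower (B : seq (T * T)) (r : nat) : seq (T * T) := flatten (nseq r B).

Definition prime_cycle (c : seq (T * T)) : Prop :=
  ~ exists (B : seq (T * T)) (r : nat), [/\ is_cycle B, 1 < r & c = cpower B r].

Definition cyc_equiv (c c' : seq (T * T)) : Prop := exists n, c' = rot n c.

(* Alternating walk [e_1,...,e_r] with vertices v_0,...,v_r (v given as a
   function nat -> T; only v_0..v_r matter).  Indices are 0-based below:
   the arc w_i is e_{i+1}. *)
Definition alt_walk_vtx (w : seq (T * T)) (v : nat -> T) : Prop :=
  all is_arc w /\
  ((forall i, i < size w ->
      nth (v 0, v 0) w i = if odd i then (v i.+1, v i) else (v i, v i.+1))
   \/
   (forall i, i < size w ->
      nth (v 0, v 0) w i = if odd i then (v i, v i.+1) else (v i.+1, v i))).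

Definition alt_walk (w : seq (T * T)) : Prop := exists v, alt_walk_vtx w v.

Definition alt_cycle (w : seq (T * T)) : Prop :=
  0 < size w /\ ~~ odd (size w) /\
  exists v, alt_walk_vtx w v /\ v 0 = v (size w).

Definition alt_backtracking (w : seq (T * T)) : bool :=
  has (fun p => p.2 == p.1) (zip w (behead w)).

Definition alt_tail (w : seq (T * T)) : bool :=
  if w is a :: s then last a s == a else false.

Definition alt_reduced (w : seq (T * T)) : bool :=
  ~~ alt_backtracking w && ~~ alt_tail w.

Definition alt_prime (w : seq (T * T)) : Prop :=
  ~ exists (B : seq (T * T)) (r : nat), [/\ alt_cycle B, 1 < r & w = cpower B r].

(* alt_flip b c inverts the arcs at 0-based positions i with odd i (+) b.
   tilde C = alt_flip false C = [e_1, e_2^{-1}, e_3, ...],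
   bar C   = alt_flip true C  = [e_1^{-1}, e_2, e_3^{-1}, ...]. *)
Definition alt_flip (b : bool) (c : seq (T * T)) : seq (T * T) :=
  [seq if odd p.1 (+) b then ainv p.2 else p.2 | p <- zip (iota 0 (size c)) c].

Definition tildeC (c : seq (T * T)) := alt_flip false c.
Definition barC (c : seq (T * T)) := alt_flip true c.
Definition tildeC_odd (c : seq (T * T)) := alt_flip false (c ++ c).

(* representatives of the classes assigned to the class of c *)
Definition images (c : seq (T * T)) : seq (seq (T * T)) :=
  if odd (size c) then [:: tildeC_odd c] else [:: tildeC c; barC c].

Definition prc (c : seq (T * T)) : Prop :=
  [/\ is_cycle c, reduced c & prime_cycle c].

Definition prac (w : seq (T * T)) : Prop :=
  [/\ alt_cycle w, alt_reduced w & alt_prime w].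

End Graphs.

From mathcomp Require Import all_boot zify.
From Stdlib Require Import Classical.
Set Implicit Arguments. Unset Strict Implicit. Unset Printing Implicit Defensive.

(* All cyclic sequences are read through the infinite periodic sequence
   [cnth s i = s_(i mod |s|)], in which rotations become index shifts and
   powers B^r become B itself.  The flip [alt_flip b] inverts every arc at a
   position i with [odd i (+) b]; on a sequence of even length it is a
   cyclic involution, [cnth (alt_flip b c) i = flip_at b i (cnth c i)]. *)

Section CyclicSequences.
Variable T : finType.
(* a default arc; the periodic extension of a nonempty sequence ignores it *)
Variable x0 : T * T.
Implicit Types s c w B X : seq (T * T).

Definition cnth s i := nth x0 s (i %% size s).

Definition flip_at (b : bool) (i : nat) (a : T * T) := if odd i (+) b then ainv a else a.

Definition linked (x y : T * T) := x.2 == y.1.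

Lemma ainvK : involutive (@ainv T). Proof. by case. Qed.

Lemma cnth_mod s i : cnth s (i %% size s) = cnth s i.
Proof. by rewrite /cnth modn_mod. Qed.

Lemma cnthS s i : cnth s i.+1 = cnth s (i %% size s).+1.
Proof. by rewrite /cnth -addn1 -modnDml addn1. Qed.

Lemma cnth_addN s i : cnth s (i + size s) = cnth s i.
Proof. by rewrite /cnth modnDr. Qed.

Lemma cnth_addMN s i m : cnth s (i + m * size s) = cnth s i.
Proof. by rewrite /cnth addnC modnMDl. Qed.

Lemma cnth_small s i : i < size s -> cnth s i = nth x0 s i.
Proof. by move=> h; rewrite /cnth modn_small. Qed.

Lemma eq_from_cnth s t : size s = size t -> (forall i, cnth s i = cnth t i) -> s = t.
Proof.
move=> hs h; apply: (eq_from_nth (x0 := x0)) => // i hi.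
by rewrite -cnth_small // h cnth_small // -hs.
Qed.

Lemma cnth_rot n s i : n <= size s -> cnth (rot n s) i = cnth s (i + n).
Proof.
move=> hn; case: (posnP (size s)) => h0.
  by move: h0 => /size0nil ->; rewrite rot_oversize // /cnth /= !nth_nil.
rewrite /cnth size_rot; set j := i %% size s.
have hj : j < size s by rewrite ltn_pmod.
rewrite -modnDml -/j /rot nth_cat size_drop; clearbody j.
case: ifP => h; first by rewrite nth_drop modn_small ?(addnC j) //; lia.
rewrite nth_take; last by lia.
have -> : j + n = size s + (j - (size s - n)) by lia.
by rewrite modnDl modn_small //; lia.
Qed.

Lemma rot_small s n : exists2 m, m <= size s & rot n s = rot m s.
Proof.
have [h|h] := leqP n (size s); first by exists n.
by exists 0; rewrite // rot0 rot_oversize // ltnW.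
Qed.

Lemma size_cpower B r : size (cpower B r) = size B * r.
Proof.
elim: r => [|r IH]; first by rewrite muln0.
by rewrite /cpower /= size_cat -/(cpower B r) IH mulnS.
Qed.

Lemma cpower1 B : cpower B 1 = B.
Proof. by rewrite /cpower /= cats0. Qed.

Lemma cpower2 B : cpower B 2 = B ++ B.
Proof. by rewrite /cpower /= cats0. Qed.

Lemma nth_cpower B r i : i < size B * r -> nth x0 (cpower B r) i = nth x0 B (i %% size B).
Proof.
elim: r i => [|r IH] i; first by rewrite muln0.
move=> hi; rewrite /cpower /= nth_cat -/(cpower B r).
case: ifP => h; first by rewrite modn_small.
rewrite IH; last by move: hi; rewrite mulnS; lia.
have hB : size B <= i by rewrite leqNgt h.
by rewrite -{2}(subnK hB) modnDr.
Qed.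

Lemma cnth_cpower B r i : 0 < r -> cnth (cpower B r) i = cnth B i.
Proof.
move=> hr; case: (posnP (size B)) => hB.
  move/size0nil: hB => ->; suff -> : cpower [::] r = [::] :> seq (T * T) by [].
  by elim: r {hr} => // r IH; rewrite /cpower /= -/(cpower [::] r) IH.
rewrite /cnth size_cpower nth_cpower; last by rewrite ltn_pmod // muln_gt0 hB.
by rewrite (modn_dvdm _ (dvdn_mulr r (dvdnn (size B)))).
Qed.

Lemma cnth_self_cat s i : cnth (s ++ s) i = cnth s i.
Proof. by rewrite -cpower2 cnth_cpower. Qed.

Lemma cpower_mul B r q : 0 < r -> 0 < q -> cpower (cpower B q) r = cpower B (q * r).
Proof.
move=> hr hq; apply: eq_from_cnth; first by rewrite !size_cpower mulnA.
by move=> i; rewrite !cnth_cpower // muln_gt0 hr hq.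
Qed.

Lemma all_cpower (a : pred (T * T)) B r : 0 < r -> all a (cpower B r) = all a B.
Proof.
case: r => // r _; elim: r => [|r IH]; first by rewrite cpower1.
by rewrite /cpower /= all_cat -/(cpower B r.+1) IH andbb.
Qed.

Lemma flip_atK b i : involutive (flip_at b i).
Proof. by move=> a; rewrite /flip_at; case: (odd i (+) b); rewrite ?ainvK. Qed.

Lemma flip_at_inj b i : injective (flip_at b i).
Proof. exact: inv_inj (flip_atK b i). Qed.

Lemma flip_at_ainv b i a : flip_at b i (ainv a) = ainv (flip_at b i a).
Proof. by rewrite /flip_at; case: (odd i (+) b). Qed.

Lemma flip_at_negb b i a : flip_at (~~ b) i a = ainv (flip_at b i a).
Proof. by rewrite /flip_at addbN; case: (odd i (+) b); rewrite ?ainvK. Qed.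

Lemma flip_atS b i a : flip_at b i.+1 a = ainv (flip_at b i a).
Proof. by rewrite /flip_at /= addNb; case: (odd i (+) b); rewrite ?ainvK. Qed.

Lemma flip_atD b i n a : flip_at b (i + n) a = flip_at (b (+) odd n) i a.
Proof. by rewrite /flip_at oddD -addbA (addbC (odd n)). Qed.

Lemma size_flip b c : size (alt_flip b c) = size c.
Proof. by rewrite /alt_flip size_map size_zip size_iota minnn. Qed.

Lemma nth_flip b c i : i < size c -> nth x0 (alt_flip b c) i = flip_at b i (nth x0 c i).
Proof.
move=> hi; rewrite /alt_flip (nth_map (0, x0)); last by rewrite size_zip size_iota minnn.
by rewrite nth_zip ?size_iota // nth_iota.
Qed.

Lemma alt_flipK b : involutive (@alt_flip T b).
Proof.
move=> c; apply: (eq_from_nth (x0 := x0)); rewrite !size_flip // => i hi.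
by rewrite !nth_flip ?size_flip // flip_atK.
Qed.

Lemma cnth_flip b c i : 0 < size c -> ~~ odd (size c) ->
  cnth (alt_flip b c) i = flip_at b i (cnth c i).
Proof.
move=> h0 he; rewrite /cnth size_flip nth_flip ?ltn_pmod // /flip_at odd_mod //; exact: negbTE.
Qed.

End CyclicSequences.

Arguments linked {T} x y.

Section Characterizations.
Variable T : finType.
Variable x0 : T * T.
Implicit Types s c w B X : seq (T * T).
Local Notation cnth := (cnth x0).

Lemma is_cycleE (e : rel T) c :
  is_cycle e c = [&& c != [::], all (is_arc e) c & cycle linked c].
Proof. by case: c => //= a s; rewrite rcons_path !andbA. Qed.

Lemma cycle_nth c : 0 < size c ->
  cycle linked c <-> (forall i, i < size c -> (nth x0 c i).2 = (nth x0 c (i.+1 %% size c)).1).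
Proof.
case: c => // a s _ /=.
have E i : i < (size s).+1 ->
    nth x0 (rcons s a) i = nth x0 (a :: s) (i.+1 %% (size s).+1).
  move=> hi; rewrite nth_rcons.
  have [hs|hs] := ltnP i (size s); first by rewrite modn_small.
  have -> : i = size s by lia.
  by rewrite eqxx modnn.
have F i : i < (size s).+1 -> nth x0 (a :: rcons s a) i = nth x0 (a :: s) i.
  by move=> hi; rewrite -rcons_cons nth_rcons hi.
split.
- move/(pathP x0) => h i hi; have := h i; rewrite size_rcons => /(_ hi) /eqP.
  by rewrite F // E.
- move=> h; apply/(pathP x0) => i; rewrite size_rcons => hi.
  by rewrite F // E // /linked (h i hi).
Qed.

Lemma cycle_cnth c : 0 < size c ->
  cycle linked c <-> (forall i, (cnth c i).2 = (cnth c i.+1).1).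
Proof.
move=> h0; rewrite cycle_nth //; split=> h i.
- by rewrite cnthS /cnth h // ltn_pmod.
- by move=> hi; have := h i; rewrite /cnth modn_small.
Qed.

Lemma has_adjacentP (R : T * T -> T * T -> bool) s :
  has (fun p => R p.1 p.2) (zip s (behead s)) <->
  exists i, i.+1 < size s /\ R (nth x0 s i) (nth x0 s i.+1).
Proof.
split.
- move/(has_nthP (x0, x0)) => [i hi]; rewrite nth_zip_cond hi /= nth_behead => hR.
  by exists i; split=> //; move: hi; rewrite size_zip size_behead; lia.
- move=> [i [hi hR]]; apply/(has_nthP (x0, x0)); exists i.
    by rewrite size_zip size_behead; lia.
  by rewrite nth_zip_cond size_zip size_behead ifT /= ?nth_behead //; lia.
Qed.

Lemma nth_self_cat s k : k < (size s).*2 -> nth x0 (s ++ s) k = cnth s k.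
Proof.
move=> hk; rewrite -(cnth_self_cat x0) cnth_small //.
by rewrite size_cat addnn.
Qed.

Lemma reducedP s : 0 < size s ->
  reduced s <-> ~ exists i, cnth s i.+1 = ainv (cnth s i).
Proof.
move=> h0; rewrite /reduced /has_backtracking; split.
- case/andP=> _ /negP h [i hi]; apply: h.
  apply/(has_adjacentP (fun a b => b == ainv a)); exists (i %% size s).
  rewrite size_cat !nth_self_cat; try (have := ltn_pmod i h0; lia).
  split; first by have := ltn_pmod i h0; lia.
  by rewrite cnth_mod -cnthS hi.
- move=> h; apply/andP; split; apply/negP;
    move/(has_adjacentP (fun a b => b == ainv a)) => [i [hi /eqP hR]];
    apply: h; exists i.
  + by rewrite !cnth_small //; lia.
  + rewrite size_cat in hi.
    by rewrite !nth_self_cat -?addnn ?(ltnW hi) in hR.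
Qed.

Lemma alt_reducedP w : 0 < size w ->
  alt_reduced w <-> ~ exists i, cnth w i.+1 = cnth w i.
Proof.
move=> h0; rewrite /alt_reduced /alt_backtracking; split.
- case/andP=> /negP h1 /negP h2 [i hi].
  set j := i %% size w.
  have hj : j < size w by rewrite ltn_pmod.
  have e1 : cnth w j = cnth w i by rewrite cnth_mod.
  have e2 : cnth w j.+1 = cnth w i.+1 by rewrite [RHS]cnthS.
  clearbody j.
  have [hl|hl] := ltnP j.+1 (size w).
    apply: h1; apply/(has_adjacentP (fun a b => b == a)); exists j; split=> //.
    by rewrite -!cnth_small // e1 e2 hi.
  apply: h2; clear h1; case: w h0 hj hl e1 e2 hi => // a s _ hj hl e1 e2 hi.
  have hjs : j = size s by move: hj hl => /=; lia.
  rewrite /alt_tail (last_nth x0) -hjs; apply/eqP.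
  by rewrite -(@cnth_small _ x0 (a :: s)) // e1 -hi -e2 /cnth hjs /= modnn.
- move=> h; apply/andP; split; apply/negP.
  + move/(has_adjacentP (fun a b => b == a)) => [i [hi /eqP hR]]; apply: h; exists i.
    by rewrite !cnth_small //; lia.
  + case: w h0 h => // a s _ h; rewrite /alt_tail (last_nth x0) => /eqP ht.
    apply: h; exists (size s).
    by rewrite /cnth /= modnn modn_small // -ht (set_nth_default a).
Qed.

Lemma inverse_shift_backtracks s t n : 0 < size s -> 0 < size t ->
  cycle linked s -> cycle linked t ->
  (forall i, cnth s i = ainv (cnth t (i + n))) -> exists j, cnth t j.+1 = ainv (cnth t j).
Proof.
move=> hs ht /(cycle_cnth hs) ls /(cycle_cnth ht) lt h; exists n.
have := ls 0; rewrite !h add0n add1n /ainv /= => e1.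
have := lt n; move: e1.
by case: (cnth t n) => a b; case: (cnth t n.+1) => c d /= -> ->.
Qed.

End Characterizations.

Section Periods.
Variable T : finType.
Variable x0 : T * T.
Variable e : rel T.
Implicit Types s c w B X : seq (T * T).
Local Notation cnth := (cnth x0).

Definition periodic s k := forall i, cnth s i = cnth s (i + k).

Lemma periodic_size s : periodic s (size s).
Proof. by move=> i; rewrite cnth_addN. Qed.

Lemma periodic_mul s k m : periodic s k -> periodic s (m * k).
Proof.
move=> hk; elim: m => [|m IH] i; first by rewrite mul0n addn0.
by rewrite mulSn addnA -IH -hk.
Qed.

Lemma periodic_sub s a b : periodic s a -> periodic s b -> b <= a -> periodic s (a - b).
Proof. by move=> ha hb hab i; rewrite [RHS]hb -addnA subnK // -ha. Qed.

Lemma periodic_gcd s a b : periodic s a -> periodic s b -> periodic s (gcdn a b).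
Proof.
move: {2}(a + b) (leqnn (a + b)) => n; elim: n a b => [|n IH] a b.
  move=> h; have -> : a = 0 by lia.
  by move=> _ hb; rewrite gcd0n.
move=> hn ha hb.
case: (posnP a) => [->|a0]; first by rewrite gcd0n.
case: (posnP b) => [->|b0]; first by rewrite gcdn0.
have [hab|hab] := leqP b a.
  rewrite -(subnK hab) gcdnC gcdnDr gcdnC.
  by apply: IH; [lia | exact: periodic_sub | done].
have hab' : a <= b by lia.
rewrite -(subnK hab') gcdnDr.
by apply: IH; [lia | done | exact: periodic_sub].
Qed.

Lemma periodic_shift s t n k : 0 < size s ->
  (forall i, cnth t i = cnth s (i + n)) -> periodic t k -> periodic s k.
Proof.
move=> h0 ht hk j.
have hn : n <= n * size s by rewrite leq_pmulr.
rewrite -(cnth_addMN x0 s j n).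
have -> : j + n * size s = (j + n * size s - n) + n by lia.
rewrite -ht hk ht.
have -> : j + n * size s - n + k + n = (j + k) + n * size s by lia.
by rewrite cnth_addMN.
Qed.

Lemma is_cycle_cpower B r : 0 < r -> is_cycle e (cpower B r) = is_cycle e B.
Proof.
move=> hr; rewrite !(is_cycleE e) all_cpower //.
have -> : (cpower B r != [::]) = (B != [::]).
  by rewrite -!size_eq0 size_cpower muln_eq0; case: r hr => // r _; rewrite orbF.
case: (B =P [::]) => //= /eqP hB.
have h0 : 0 < size B by rewrite lt0n size_eq0.
have h1 : 0 < size (cpower B r) by rewrite size_cpower muln_gt0 h0.
congr (_ && _); apply/idP/idP => /(cycle_cnth x0) h; apply/(cycle_cnth x0) => // i.
- by have := h h1 i; rewrite !cnth_cpower.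
- by rewrite !cnth_cpower //; apply: h.
Qed.

Lemma period_not_prime s k : is_cycle e s -> 0 < k < size s -> periodic s k ->
  ~ prime_cycle e s.
Proof.
move=> hc /andP[k0 kN] hk; apply.
set g := gcdn k (size s).
have hg : periodic s g by apply: periodic_gcd => //; exact: periodic_size.
have g0 : 0 < g by rewrite gcdn_gt0 k0.
have gk : g <= k by apply: dvdn_leq => //; exact: dvdn_gcdl.
set r := size s %/ g.
have hr : size s = g * r by rewrite /r mulnC divnK // dvdn_gcdr.
have r1 : 1 < r by case: r hr => [|[|r]] hr //; move: hr; rewrite ?muln0 ?muln1; lia.
have hgs : size (take g s) = g by rewrite size_takel; lia.
have es : s = cpower (take g s) r.
  apply: (eq_from_cnth (x0 := x0)); first by rewrite size_cpower hgs.
  move=> i; rewrite cnth_cpower; last by lia.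
  rewrite {1}(divn_eq i g) addnC -(@periodic_mul s g (i %/ g) hg).
  rewrite {2}/cnth hgs nth_take ?ltn_pmod // cnth_small //.
  by have := ltn_pmod i g0; lia.
exists (take g s), r; split=> //.
by rewrite -(is_cycle_cpower _ (ltnW r1)) -es.
Qed.

Lemma prime_root c : is_cycle e c ->
  exists B r, [/\ 0 < r, c = cpower B r, is_cycle e B & prime_cycle e B].
Proof.
move: {2}(size c) (leqnn (size c)) => n; elim: n c => [|n IH] c hn hc.
  by move: hc; rewrite is_cycleE -size_eq0; case: (size c) hn.
case: (classic (prime_cycle e c)) => hp; first by exists c, 1; rewrite cpower1.
have [B [r [hB hr hcB]]] : exists B r, [/\ is_cycle e B, 1 < r & c = cpower B r].
  exact: NNPP.
have hB0 : 0 < size B by move: hB; rewrite is_cycleE lt0n size_eq0; case/andP.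
have hsz : size B <= n.
  have : size B * 2 <= size B * r by rewrite leq_mul2l hr orbT.
  by move: hn; rewrite hcB size_cpower; lia.
have [D [q [hq hBD hD hpD]]] := IH B hsz hB.
exists D, (q * r); split=> //; first by rewrite muln_gt0 hq; lia.
by rewrite hcB hBD cpower_mul //; lia.
Qed.

End Periods.

Section Flipping.
Variable T : finType.
Variable x0 : T * T.
Variable e : rel T.
Hypothesis e_sym : symmetric e.
Implicit Types s c w B X : seq (T * T).
Local Notation cnth := (cnth x0).

Lemma is_arc_flip_at b i a : is_arc e (flip_at b i a) = is_arc e a.
Proof. by case: a => u v; rewrite /flip_at; case: ifP => _ //; rewrite /is_arc /= e_sym. Qed.

Lemma is_cycle_gt0 c : is_cycle e c -> 0 < size c.
Proof. by rewrite is_cycleE lt0n size_eq0; case/andP. Qed.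

Lemma reduced_cnth s t : 0 < size s -> 0 < size t ->
  (forall i, cnth s i = cnth t i) -> reduced s -> reduced t.
Proof.
move=> hs ht E /(reducedP x0 hs) hr; apply/(reducedP x0 ht) => -[i hi]; apply: hr.
by exists i; rewrite !E.
Qed.

(* Part (1)/(2), cycle condition: the flip of an even cycle alternates, with
   vertices v_i = o(e_(i+1)) *)
Lemma alt_cycle_flip b c : is_cycle e c -> ~~ odd (size c) -> alt_cycle e (alt_flip b c).
Proof.
rewrite is_cycleE => /and3P[hne ha hc] hev.
have h0 : 0 < size c by rewrite lt0n size_eq0.
have hl := (cycle_cnth x0 h0).1 hc.
rewrite /alt_cycle size_flip; split=> //; split=> //.
exists (fun i => (cnth c i).1); split; last by rewrite -(add0n (size c)) cnth_addN.
split.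
  apply/(all_nthP x0) => i; rewrite size_flip => hi.
  by rewrite nth_flip // is_arc_flip_at; exact: (all_nthP x0 ha).
case: b; [right|left] => i; rewrite size_flip => hi;
  rewrite (set_nth_default x0) ?size_flip // nth_flip // -cnth_small // -hl /flip_at;
  by case: (odd i); case: (cnth c i).
Qed.

Lemma alt_reduced_flipE b X : 0 < size X -> ~~ odd (size X) ->
  alt_reduced (alt_flip b X) <-> reduced X.
Proof.
move=> h0 hev; rewrite (alt_reducedP x0) ?size_flip // (reducedP x0 h0).
have E i : cnth (alt_flip b X) i.+1 = cnth (alt_flip b X) i <->
           cnth X i.+1 = ainv (cnth X i).
  rewrite !cnth_flip // flip_atS -flip_at_ainv.
  by split=> [/flip_at_inj <-|->]; rewrite ainvK.
by split=> h [i hi]; apply: h; exists i; apply/E.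
Qed.

(* Part (1)/(2), primality: X is c (c even) or c c (c odd); a proper
   alternating root of the flip of X would give c a proper period *)
Lemma alt_prime_flip b c X : is_cycle e c -> prime_cycle e c ->
  (forall i, cnth X i = cnth c i) -> ~~ odd (size X) ->
  size X = size c \/ (size X = (size c).*2 /\ odd (size c)) ->
  alt_prime e (alt_flip b X).
Proof.
move=> hc hp hX hev hsz [B [r [[hB0 [hBe _]] hr hw]]].
have hN : size X = size B * r by rewrite -size_cpower -hw size_flip.
have hX0 : 0 < size X by rewrite hN muln_gt0 hB0; lia.
have h2B : size B * 2 <= size X by rewrite hN leq_mul2l hr orbT.
apply: (period_not_prime (x0 := x0) hc (k := size B)) => //.
  rewrite hB0 /= ltn_neqAle; apply/andP; split; last by case: hsz; lia.
  by apply/eqP => E; case: hsz => [|[hs ho]]; [lia | move: hBe; rewrite E ho].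
move=> i; apply: (@flip_at_inj T b i).
have E j : cnth (alt_flip b X) j = flip_at b j (cnth c j) by rewrite cnth_flip // hX.
rewrite -E -[in RHS](addbF b) -[in RHS](negbTE hBe) -flip_atD -E.
by rewrite hw !cnth_cpower ?(ltnW hr) // cnth_addN.
Qed.

End Flipping.

Section Correspondence.
Variable T : finType.
Variable x0 : T * T.
Variable e : rel T.
Hypothesis e_sym : symmetric e.
Implicit Types s c w B X : seq (T * T).
Local Notation cnth := (cnth x0).

Lemma prc_gt0 c : prc e c -> 0 < size c.
Proof. by case=> /is_cycle_gt0. Qed.

Lemma prc_cycle c : prc e c -> cycle linked c.
Proof. by case; rewrite is_cycleE => /and3P[]. Qed.

Lemma images_cnth c x : 0 < size c -> x \in images c ->
  exists b, forall i, cnth x i = flip_at b i (cnth c i).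
Proof.
move=> h0; rewrite /images; case: ifP => ho.
  rewrite inE => /eqP ->; exists false => i.
  by rewrite cnth_flip ?size_cat ?addnn ?odd_double ?cnth_self_cat //; lia.
by rewrite !inE => /orP[] /eqP ->; [exists false | exists true] => i; rewrite cnth_flip // ho.
Qed.

Lemma even_images_prac c : prc e c -> ~~ odd (size c) ->
  [/\ prac e (tildeC c), size (tildeC c) = size c,
      prac e (barC c) & size (barC c) = size c].
Proof.
move=> hp hev; have h0 := prc_gt0 hp; case: hp => hc hr hpr.
have H b : prac e (alt_flip b c).
  split; [exact: alt_cycle_flip | exact/alt_reduced_flipE |].
  by apply: (alt_prime_flip (x0 := x0) hc hpr) => //; left.
by split; rewrite ?size_flip //; apply: H.
Qed.

Lemma odd_image_prac c : prc e c -> odd (size c) ->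
  prac e (tildeC_odd c) /\ size (tildeC_odd c) = 2 * size c.
Proof.
move=> hp ho; have h0 := prc_gt0 hp; case: hp => hc hr hpr.
have hsz : size (c ++ c) = (size c).*2 by rewrite size_cat addnn.
have hev : ~~ odd (size (c ++ c)) by rewrite hsz odd_double.
have h00 : 0 < size (c ++ c) by rewrite hsz; lia.
split; last by rewrite /tildeC_odd size_flip hsz; lia.
split.
- by apply: alt_cycle_flip => //; rewrite -cpower2 is_cycle_cpower.
- apply/alt_reduced_flipE => //; apply: (reduced_cnth (x0 := x0) h0 h00) => // i.
  by rewrite cnth_self_cat.
- apply: (alt_prime_flip (x0 := x0) hc hpr) => //; last by right.
  by move=> i; rewrite cnth_self_cat.
Qed.

Lemma images_rot c m x : 0 < size c -> m <= size c -> x \in images c ->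
  exists2 y, y \in images (rot m c) & cyc_equiv x y.
Proof.
move=> h0 hm hx.
have hfs i : cnth (rot m c) i = cnth c (i + m) by rewrite cnth_rot.
rewrite /images size_rot in hx *.
case: ifP hx => ho.
  rewrite inE => /eqP ->; exists (tildeC_odd (rot m c)); first by rewrite inE.
  pose m' := if odd m then m + size c else m.
  have hs1 : size (rot m c ++ rot m c) = (size c).*2 by rewrite size_cat size_rot addnn.
  have hs2 : size (c ++ c) = (size c).*2 by rewrite size_cat addnn.
  have hev : ~~ odd m' by rewrite /m'; case hmo: (odd m); rewrite ?hmo // oddD hmo ho.
  exists m'; apply: (eq_from_cnth (x0 := x0)).
    by rewrite size_rot /tildeC_odd !size_flip hs1 hs2.
  move=> i; rewrite cnth_rot; last by rewrite /tildeC_odd size_flip hs2 /m'; case: (odd m); lia.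
  rewrite /tildeC_odd !cnth_flip ?hs1 ?hs2 ?odd_double //; try lia.
  rewrite !cnth_self_cat hfs flip_atD (negbTE hev) addbF.
  by rewrite /m'; case: (odd m); rewrite // addnA cnth_addN.
rewrite !inE => hx.
have [b ->] : exists b, x = alt_flip b c by case/orP: hx => /eqP ->; [exists false | exists true].
exists (alt_flip (b (+) odd m) (rot m c)).
  by case: b; case: (odd m); rewrite /tildeC /barC /= !inE eqxx ?orbT.
exists m; apply: (eq_from_cnth (x0 := x0)); first by rewrite size_rot !size_flip size_rot.
move=> i; rewrite cnth_rot ?size_flip // !cnth_flip ?size_rot ?ho //.
by rewrite hfs flip_atD.
Qed.

(* flips of two prime reduced cycles agree up to a shift m only if the flip
   parities agree and c' is the shift of c: otherwise c would backtrack *)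
Lemma flipped_shift c c' b b' m : prc e c -> prc e c' ->
  (forall i, flip_at b' i (cnth c' i) = flip_at b i (cnth c (i + m))) ->
  b' = b /\ forall i, cnth c' i = cnth c (i + m).
Proof.
move=> hp hp' E; have h0 := prc_gt0 hp; have h0' := prc_gt0 hp'.
case: (eqVneq b' b) E => [-> E | /negPf hb E].
  by split=> // i; apply: (@flip_at_inj T b i); rewrite E.
have G i : cnth c' i = ainv (cnth c (i + m)).
  apply: (@flip_at_inj T b' i); rewrite E flip_at_ainv -flip_at_negb.
  by move: hb; case: (b); case: (b').
have [j hj] := inverse_shift_backtracks h0' h0 (prc_cycle hp') (prc_cycle hp) G.
by case: hp => _ /(reducedP x0 h0) hr _; case: hr; exists j.
Qed.

Lemma shift_equiv c c' m : prc e c -> prc e c' ->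
  (forall i, cnth c' i = cnth c (i + m)) -> cyc_equiv c c'.
Proof.
move=> hp hp' E; have h0 := prc_gt0 hp; have h0' := prc_gt0 hp'.
case: hp hp' => [hc _ hpr] [hc' _ hpr'].
have [hlt|hge] := ltnP (size c) (size c').
  case: (period_not_prime (x0 := x0) hc' (k := size c)); rewrite ?h0 //.
  by move=> i; rewrite !E addnAC cnth_addN.
have [hlt'|hle] := ltnP (size c') (size c).
  case: (period_not_prime (x0 := x0) hc (k := size c')); rewrite ?h0' //.
  exact: (periodic_shift h0 E (periodic_size x0 c')).
exists (m %% size c); apply: (eq_from_cnth (x0 := x0)); first by rewrite size_rot; lia.
move=> i; rewrite cnth_rot ?(ltnW (ltn_pmod _ h0)) // E.
by rewrite -[RHS]cnth_mod modnDmr cnth_mod.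
Qed.

Lemma tilde_bar_inequiv c : prc e c -> ~~ odd (size c) -> ~ cyc_equiv (tildeC c) (barC c).
Proof.
move=> hp hev [n hn]; have h0 := prc_gt0 hp.
have [m hm hnm] := rot_small (tildeC c) n; rewrite hnm size_flip in hn hm.
have E i : flip_at true i (cnth c i) = flip_at (odd m) i (cnth c (i + m)).
  by rewrite -cnth_flip // -/(barC c) hn cnth_rot ?size_flip // cnth_flip // flip_atD.
have [hmo P] := flipped_shift hp hp E.
case: hp => hc _ hpr; apply: (period_not_prime (x0 := x0) hc (k := m) _ _ hpr) => //.
have m0 : m != 0 by apply/eqP => Em; move: hmo; rewrite Em.
have mN : m != size c by apply/eqP => Em; move: hev; rewrite -Em -hmo.
lia.
Qed.

Lemma images_injective c c' x y : prc e c -> prc e c' ->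
  x \in images c -> y \in images c' -> cyc_equiv x y -> cyc_equiv c c'.
Proof.
move=> hp hp' hx hy [n hn].
have [bx fx] := images_cnth (prc_gt0 hp) hx.
have [by_ fy] := images_cnth (prc_gt0 hp') hy.
have [m hm hnm] := rot_small x n; rewrite hnm in hn; subst y.
have E i : flip_at by_ i (cnth c' i) = flip_at (bx (+) odd m) i (cnth c (i + m)).
  by rewrite -fy cnth_rot // fx flip_atD.
have [_ F] := flipped_shift hp hp' E.
exact: shift_equiv hp hp' F.
Qed.

End Correspondence.

Section Surjectivity.
Variable T : finType.
Variable x0 : T * T.
Variable e : rel T.
Hypothesis e_sym : symmetric e.
Implicit Types s c w B X : seq (T * T).
Local Notation cnth := (cnth x0).

(* unflipping an alternating cycle w = [e_1, e_2, ...] with vertices v_i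
   gives the cycle ((v_0, v_1), (v_1, v_2), ...) *)
Lemma unflip_alt_cycle w : alt_cycle e w -> exists b, is_cycle e (alt_flip b w).
Proof.
case=> hw0 [_ [v [[hwa hor] hv]]].
have [b hb] : exists b, forall i, i < size w -> nth x0 w i = flip_at b i (v i, v i.+1).
  case: hor => h; [exists false | exists true] => i hi;
    rewrite (set_nth_default (v 0, v 0)) // h // /flip_at; by case: (odd i).
exists b; rewrite is_cycleE; apply/and3P; split.
- by rewrite -size_eq0 size_flip -lt0n.
- apply/(all_nthP x0) => i; rewrite size_flip => hi.
  by rewrite nth_flip // is_arc_flip_at //; apply: (all_nthP x0 hwa).
- apply/(cycle_nth x0); rewrite size_flip // => i hi.
  rewrite !nth_flip ?ltn_pmod // !hb ?ltn_pmod // !flip_atK /=.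
  have [hl|hl] := ltnP i.+1 (size w); first by rewrite modn_small.
  have -> : i.+1 = size w by lia.
  by rewrite modnn hv.
Qed.

Lemma flip_cpower b X w q : 0 < q -> 0 < size X -> ~~ odd (size X) ->
  size w = size X * q -> (forall i, cnth w i = flip_at b i (cnth X i)) ->
  w = cpower (alt_flip b X) q.
Proof.
move=> hq h0 hev hsz E; apply: (eq_from_cnth (x0 := x0)).
  by rewrite size_cpower size_flip.
by move=> i; rewrite cnth_cpower // cnth_flip.
Qed.

(* the even cycle carrying the flips assigned to a prime cycle B: B itself
   if B is even, B B if B is odd *)
Definition even_carrier B := if odd (size B) then B ++ B else B.

Lemma cnth_even_carrier B i : cnth (even_carrier B) i = cnth B i.
Proof. by rewrite /even_carrier; case: ifP; rewrite ?cnth_self_cat. Qed.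

Lemma size_even_carrier B :
  size (even_carrier B) = if odd (size B) then (size B).*2 else size B.
Proof. by rewrite /even_carrier; case: ifP; rewrite ?size_cat ?addnn. Qed.

Lemma even_carrier_even B : ~~ odd (size (even_carrier B)).
Proof. by rewrite size_even_carrier; case: ifP => [_|->]; rewrite ?odd_double. Qed.

Lemma even_carrier_exponent B r : 0 < r -> ~~ odd (size B * r) ->
  exists2 q, 0 < q & size B * r = size (even_carrier B) * q.
Proof.
move=> hr; rewrite size_even_carrier oddM; case: ifP => ho /=; last by exists r.
move=> hre; exists r./2; first by move: hr hre; case: r => [|[|r]].
by rewrite -[in LHS](even_halfK hre) -!muln2 mulnA mulnAC.
Qed.

Lemma even_carrier_image b B : 0 < size B ->
  exists2 x, x \in images B & cyc_equiv x (alt_flip b (even_carrier B)).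
Proof.
move=> h0; rewrite /images /even_carrier; case: ifP => ho; last first.
  by exists (alt_flip b B); [case: b; rewrite !inE eqxx ?orbT | exists 0; rewrite rot0].
have hsz : size (B ++ B) = (size B).*2 by rewrite size_cat addnn.
have hev : ~~ odd (size (B ++ B)) by rewrite hsz odd_double.
exists (tildeC_odd B); first by rewrite inE.
exists (b * size B); apply: (eq_from_cnth (x0 := x0)); first by rewrite size_rot !size_flip.
move=> i; rewrite cnth_rot; last by rewrite size_flip hsz; case: (b); lia.
rewrite !cnth_flip ?hsz ?odd_double ?double_gt0 // flip_atD oddM ho andbT /=.
by rewrite !cnth_self_cat; case: (b); rewrite ?mul1n ?mul0n ?addn0 ?cnth_addN.
Qed.

Lemma images_surjective w : prac e w ->
  exists c x, [/\ prc e c, x \in images c & cyc_equiv x w].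
Proof.
case=> hw hwr hwp; have [hw0 [hwev _]] := hw.
have [b hc] := unflip_alt_cycle hw; set c := alt_flip b w in hc.
have hwc : w = alt_flip b c by rewrite alt_flipK.
have hsc : size c = size w by rewrite size_flip.
have hc0 : 0 < size c by rewrite hsc.
have hcev : ~~ odd (size c) by rewrite hsc.
have hcr : reduced c by apply/(alt_reduced_flipE x0 b hc0); rewrite -?hwc.
have [B [r [hr hcB hB hBp]]] := prime_root x0 hc.
have hB0 := is_cycle_gt0 hB.
have hBr : reduced B.
  by apply: (reduced_cnth (x0 := x0) hc0 hB0) hcr => i; rewrite hcB cnth_cpower.
have hcX : is_cycle e (even_carrier B).
  by rewrite /even_carrier; case: ifP; rewrite // -cpower2 is_cycle_cpower.
have [q hq hsz] : exists2 q, 0 < q & size B * r = size (even_carrier B) * q.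
  by apply: even_carrier_exponent; rewrite // -size_cpower -hcB.
have hwq : w = cpower (alt_flip b (even_carrier B)) q.
  apply: flip_cpower; rewrite ?even_carrier_even ?(is_cycle_gt0 hcX) //.
    by rewrite -hsz -size_cpower -hcB hsc.
  by move=> i; rewrite hwc cnth_flip // cnth_even_carrier hcB cnth_cpower.
have hq1 : q = 1.
  case: (ltnP 1 q) => hq1; last by lia.
  by case: hwp; exists (alt_flip b (even_carrier B)), q; split=> //;
    apply: alt_cycle_flip; rewrite ?even_carrier_even.
have [x hx hxw] := even_carrier_image b hB0.
by exists B, x; split=> //; rewrite hwq hq1 cpower1.
Qed.

End Surjectivity.

(* Every component below is about a nonempty sequence c (resp. w); its first
   arc serves as the default arc [x0] of the periodic extension. *)
Theorem proposition1 (T : finType) (e : rel T)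
  (e_sym : symmetric e) (e_irr : irreflexive e)
  (e_conn : forall x y : T, connect e x y) :
  (* (1) even length *)
  (forall c : seq (T * T), prc e c -> ~~ odd (size c) ->
     [/\ prac e (tildeC c), size (tildeC c) = size c,
         prac e (barC c) & size (barC c) = size c]) /\
  (* (2) odd length *)
  (forall c : seq (T * T), prc e c -> odd (size c) ->
     prac e (tildeC_odd c) /\ size (tildeC_odd c) = 2 * size c) /\
  (* (3) the assignment of classes is well defined ... *)
  (forall c c' : seq (T * T), prc e c -> prc e c' -> cyc_equiv c c' ->
     forall x, x \in images c -> exists2 y, y \in images c' & cyc_equiv x y) /\
  (* ... each even class gets exactly two distinct classes ... *)
  (forall c : seq (T * T), prc e c -> ~~ odd (size c) ->
     ~ cyc_equiv (tildeC c) (barC c)) /\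
  (* ... distinct classes get disjoint images (injectivity) ... *)
  (forall (c c' : seq (T * T)) (x y : seq (T * T)), prc e c -> prc e c' ->
     x \in images c -> y \in images c' -> cyc_equiv x y -> cyc_equiv c c') /\
  (* ... and every class of prime reduced alternating cycles is hit. *)
  (forall w : seq (T * T), prac e w ->
     exists (c : seq (T * T)) (x : seq (T * T)),
       [/\ prc e c, x \in images c & cyc_equiv x w]).
Proof.
split; [|split; [|split; [|split; [|split]]]].
- by case=> [|x0 s] hp; [case: hp | exact: (even_images_prac x0 e_sym hp)].
- by case=> [|x0 s] hp; [case: hp | exact: (odd_image_prac x0 e_sym hp)].
- case=> [|x0 s] c' hp hp' [n ->] x hx; first by case: hp.
  have [m hm ->] := rot_small (x0 :: s) n.
  exact: (images_rot x0 (prc_gt0 hp) hm hx).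
- by case=> [|x0 s] hp; [case: hp | exact: (tilde_bar_inequiv x0 hp)].
- by case=> [|x0 s] c' x y hp; [case: hp | exact: (images_injective x0 hp)].
- by case=> [|x0 s] hp; [case: hp => [[]] | exact: (images_surjective x0 e_sym hp)].
Qed.
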